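(* Let $T=(T,\eta,\mu)$ be a commutative monad on a category $\mathcal{A}$ with finite products, and assume $\mathrm{Alg}(T)$ is symmetric monoidal $(\otimes,I)$ with $I=T(1)$ such that the free functor is strong monoidal via natural isomorphisms $\xi\colon T(X)\otimes T(Y)\cong T(X\times Y)$ of algebras. Let $a\colon T(X)\to X$ be a $T$-algebra with a basis $b\colon X\to T(X)$. Define algebra maps $d_b=(a\otimes a)\circ\xi^{-1}\circ T(\Delta)\circ b\colon X\to X\otimes X$ and $u_b=T(!)\circ b\colon X\to T(1)=I$, where $\Delta\colon X\to X\times X$ is the diagonal and $!\colon X\to1$. Then $(X,d_b,u_b)$ is a commutative comonoid in $\mathrm{Alg}(T)$.
   Context: $\mathrm{Alg}(T)$: Eilenberg–Moore algebras of $T$. A basis ($\overline{T}$-coalgebra) on the algebra $a\colon TX\to X$ is a map $b\colon X\to TX$ in $\mathcal{A}$ with $b\circ a=\mu_X\circ T(b)$, $a\circ b=\mathrm{id}_X$ and $T(\eta_X)\circ b=T(b)\circ b$. A commutative comonoid in a symmetric monoidal category is an object with maps $d\colon X\to X\otimes X$, $u\colon X\to I$ satisfying coassociativity, counitality and cocommutativity. A commutative (symmetric monoidal) monad is one whose two double strengths coincide; in this setting $a\otimes a$ denotes the tensor of algebra maps $T(X)\otimes T(X)\to X\otimes X$. *)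

(* Equality of morphisms is Leibniz equality. *)
From Stdlib Require Import ProofIrrelevance.

Record Category := {
  ob :> Type;
  hom : ob -> ob -> Type;
  idm : forall A, hom A A;
  comp : forall A B D, hom B D -> hom A B -> hom A D;
  comp_id_l : forall A B (f : hom A B), comp A B B (idm B) f = f;
  comp_id_r : forall A B (f : hom A B), comp A A B f (idm A) = f;
  comp_assoc : forall A B D E (h : hom D E) (g : hom B D) (f : hom A B),
      comp A D E h (comp A B D g f) = comp A B E (comp B D E h g) f }.

Arguments hom {c} _ _.
Arguments idm {c} A.
Arguments comp {c A B D} _ _.
Arguments comp_id_l {c A B} f.
Arguments comp_id_r {c A B} f.
Arguments comp_assoc {c A B D E} h g f.

Notation "g ∘ f" := (comp g f) (at level 40, left associativity).

Record FinProducts (C : Category) := {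
  terminal : C;
  bang : forall X : C, hom X terminal;
  bang_uniq : forall (X : C) (f : hom X terminal), f = bang X;
  prod : C -> C -> C;
  pr1 : forall X Y : C, hom (prod X Y) X;
  pr2 : forall X Y : C, hom (prod X Y) Y;
  pair : forall Z X Y : C, hom Z X -> hom Z Y -> hom Z (prod X Y);
  pr1_pair : forall Z X Y (f : hom Z X) (g : hom Z Y), pr1 X Y ∘ pair Z X Y f g = f;
  pr2_pair : forall Z X Y (f : hom Z X) (g : hom Z Y), pr2 X Y ∘ pair Z X Y f g = g;
  pair_uniq : forall Z X Y (h : hom Z (prod X Y)),
      pair Z X Y (pr1 X Y ∘ h) (pr2 X Y ∘ h) = h }.

Arguments terminal {C} f0.
Arguments bang {C} f0 X.
Arguments prod {C} f0 _ _.
Arguments pr1 {C} f0 X Y.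
Arguments pr2 {C} f0 X Y.
Arguments pair {C} f0 {Z X Y} _ _.

Section ProdOps.
Context {C : Category} (P : FinProducts C).
Definition prod_map {X X' Y Y' : C} (f : hom X X') (g : hom Y Y')
  : hom (prod P X Y) (prod P X' Y') :=
  pair P (f ∘ pr1 P X Y) (g ∘ pr2 P X Y).
Definition diag (X : C) : hom X (prod P X X) := pair P (idm X) (idm X).
Definition swap (X Y : C) : hom (prod P X Y) (prod P Y X) :=
  pair P (pr2 P X Y) (pr1 P X Y).
Definition assocp (X Y Z : C) : hom (prod P (prod P X Y) Z) (prod P X (prod P Y Z)) :=
  pair P (pr1 P X Y ∘ pr1 P (prod P X Y) Z)
         (pair P (pr2 P X Y ∘ pr1 P (prod P X Y) Z) (pr2 P (prod P X Y) Z)).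
End ProdOps.

Record Monad (C : Category) := {
  T : C -> C;
  Tmap : forall X Y : C, hom X Y -> hom (T X) (T Y);
  Tmap_id : forall X : C, Tmap X X (idm X) = idm (T X);
  Tmap_comp : forall X Y Z (g : hom Y Z) (f : hom X Y),
      Tmap X Z (g ∘ f) = Tmap Y Z g ∘ Tmap X Y f;
  eta : forall X : C, hom X (T X);
  mu : forall X : C, hom (T (T X)) (T X);
  eta_nat : forall X Y (f : hom X Y), Tmap X Y f ∘ eta X = eta Y ∘ f;
  mu_nat : forall X Y (f : hom X Y), Tmap X Y f ∘ mu X = mu Y ∘ Tmap _ _ (Tmap X Y f);
  mu_eta_l : forall X, mu X ∘ eta (T X) = idm (T X);
  mu_eta_r : forall X, mu X ∘ Tmap _ _ (eta X) = idm (T X);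
  mu_assoc : forall X, mu X ∘ Tmap _ _ (mu X) = mu X ∘ mu (T X) }.

Arguments T {C} m _.
Arguments Tmap {C} m {X Y} _.
Arguments eta {C} m X.
Arguments mu {C} m X.
Arguments mu_eta_l {C} m X.
Arguments mu_assoc {C} m X.
Arguments mu_nat {C} m X Y f.
Arguments Tmap_id {C} m X.
Arguments Tmap_comp {C} m {X Y Z} g f.

Record CommStrength {C : Category} (P : FinProducts C) (M : Monad C) := {
  st : forall X Y : C, hom (prod P X (T M Y)) (T M (prod P X Y));
  st_nat : forall X X' Y Y' (f : hom X X') (g : hom Y Y'),
      Tmap M (prod_map P f g) ∘ st X Y = st X' Y' ∘ prod_map P f (Tmap M g);
  st_unit : forall Y : C,
      Tmap M (pr2 P (terminal P) Y) ∘ st (terminal P) Y = pr2 P (terminal P) (T M Y);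
  st_assoc : forall X Y Z : C,
      Tmap M (assocp P X Y Z) ∘ st (prod P X Y) Z
      = st X (prod P Y Z) ∘ prod_map P (idm X) (st Y Z) ∘ assocp P X Y (T M Z);
  st_eta : forall X Y : C,
      st X Y ∘ prod_map P (idm X) (eta M Y) = eta M (prod P X Y);
  st_mu : forall X Y : C,
      st X Y ∘ prod_map P (idm X) (mu M Y)
      = mu M (prod P X Y) ∘ Tmap M (st X Y) ∘ st X (T M Y);
  (* costrength  T X × Y -> T (X × Y) *)
  commutative : forall X Y : C,
      let cst := fun A B : C =>
        Tmap M (swap P B A) ∘ st B A ∘ swap P (T M A) B in
      mu M (prod P X Y) ∘ Tmap M (cst X Y) ∘ st (T M X) Y
      = mu M (prod P X Y) ∘ Tmap M (st X Y) ∘ cst X (T M Y) }.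

Arguments st {C P M} c X Y.

Section Algebras.
Context {C : Category} (M : Monad C).

Record Alg := {
  acar : C;
  astr : hom (T M acar) acar;
  astr_eta : astr ∘ eta M acar = idm acar;
  astr_mu : astr ∘ Tmap M astr = astr ∘ mu M acar }.

Definition AlgHom (A B : Alg) : Type :=
  { f : hom (acar A) (acar B) | f ∘ astr A = astr B ∘ Tmap M f }.

Definition ahid (A : Alg) : AlgHom A A.
Proof.
  exists (idm (acar A)).
  rewrite Tmap_id, comp_id_l, comp_id_r. reflexivity.
Defined.

Definition ahcomp {A B D : Alg} (g : AlgHom B D) (f : AlgHom A B) : AlgHom A D.
Proof.
  exists (proj1_sig g ∘ proj1_sig f).
  destruct g as [g Hg], f as [f Hf]; simpl.
  rewrite <- comp_assoc, Hf, comp_assoc, Hg, <- comp_assoc, <- Tmap_comp.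
  reflexivity.
Defined.

Definition FreeAlg (X : C) : Alg :=
  {| acar := T M X; astr := mu M X;
     astr_eta := mu_eta_l M X; astr_mu := mu_assoc M X |}.

Definition Fmap {X Y : C} (f : hom X Y) : AlgHom (FreeAlg X) (FreeAlg Y) :=
  exist _ (Tmap M f) (mu_nat M X Y f).

Definition str_hom (A : Alg) : AlgHom (FreeAlg (acar A)) A :=
  exist _ (astr A) (eq_sym (astr_mu A)).

Definition basis_hom (A : Alg) (b : hom (acar A) (T M (acar A)))
  (Hb : b ∘ astr A = mu M (acar A) ∘ Tmap M b) : AlgHom A (FreeAlg (acar A)) :=
  exist _ b Hb.
End Algebras.

Arguments acar {C M} a.
Arguments astr {C M} a.

Record SymMonoidal (O : Type) (Hm : O -> O -> Type)
  (cmp : forall a b c : O, Hm b c -> Hm a b -> Hm a c)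
  (id : forall a : O, Hm a a) (I : O) := {
  tens : O -> O -> O;
  tmap : forall a b a' b' : O, Hm a a' -> Hm b b' -> Hm (tens a b) (tens a' b');
  tmap_id : forall a b, tmap _ _ _ _ (id a) (id b) = id (tens a b);
  tmap_comp : forall a b a' b' a'' b'' (f : Hm a a') (g : Hm a' a'')
      (f' : Hm b b') (g' : Hm b' b''),
      tmap _ _ _ _ (cmp _ _ _ g f) (cmp _ _ _ g' f')
      = cmp _ _ _ (tmap _ _ _ _ g g') (tmap _ _ _ _ f f');
  alpha : forall a b c, Hm (tens (tens a b) c) (tens a (tens b c));
  alpha_inv : forall a b c, Hm (tens a (tens b c)) (tens (tens a b) c);
  alpha_iso1 : forall a b c, cmp _ _ _ (alpha_inv a b c) (alpha a b c) = id _;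
  alpha_iso2 : forall a b c, cmp _ _ _ (alpha a b c) (alpha_inv a b c) = id _;
  alpha_nat : forall a b c a' b' c' (f : Hm a a') (g : Hm b b') (h : Hm c c'),
      cmp _ _ _ (alpha a' b' c') (tmap _ _ _ _ (tmap _ _ _ _ f g) h)
      = cmp _ _ _ (tmap _ _ _ _ f (tmap _ _ _ _ g h)) (alpha a b c);
  lam : forall a, Hm (tens I a) a;
  lam_inv : forall a, Hm a (tens I a);
  lam_iso1 : forall a, cmp _ _ _ (lam_inv a) (lam a) = id _;
  lam_iso2 : forall a, cmp _ _ _ (lam a) (lam_inv a) = id _;
  lam_nat : forall a a' (f : Hm a a'),
      cmp _ _ _ (lam a') (tmap _ _ _ _ (id I) f) = cmp _ _ _ f (lam a);
  rho : forall a, Hm (tens a I) a;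
  rho_inv : forall a, Hm a (tens a I);
  rho_iso1 : forall a, cmp _ _ _ (rho_inv a) (rho a) = id _;
  rho_iso2 : forall a, cmp _ _ _ (rho a) (rho_inv a) = id _;
  rho_nat : forall a a' (f : Hm a a'),
      cmp _ _ _ (rho a') (tmap _ _ _ _ f (id I)) = cmp _ _ _ f (rho a);
  sigma : forall a b, Hm (tens a b) (tens b a);
  sigma_nat : forall a b a' b' (f : Hm a a') (g : Hm b b'),
      cmp _ _ _ (sigma a' b') (tmap _ _ _ _ f g)
      = cmp _ _ _ (tmap _ _ _ _ g f) (sigma a b);
  sigma_sym : forall a b, cmp _ _ _ (sigma b a) (sigma a b) = id _;
  pentagon : forall a b c d,
      cmp _ _ _ (alpha a b (tens c d)) (alpha (tens a b) c d)
      = cmp _ _ _ (tmap _ _ _ _ (id a) (alpha b c d))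
          (cmp _ _ _ (alpha a (tens b c) d) (tmap _ _ _ _ (alpha a b c) (id d)));
  triangle : forall a b,
      cmp _ _ _ (tmap _ _ _ _ (id a) (lam b)) (alpha a I b)
      = tmap _ _ _ _ (rho a) (id b);
  hexagon : forall a b c,
      cmp _ _ _ (alpha b c a) (cmp _ _ _ (sigma a (tens b c)) (alpha a b c))
      = cmp _ _ _ (tmap _ _ _ _ (id b) (sigma a c))
          (cmp _ _ _ (alpha b a c) (tmap _ _ _ _ (sigma a b) (id c))) }.

Arguments tens {O Hm cmp id I} s _ _.
Arguments tmap {O Hm cmp id I} s {a b a' b'} _ _.
Arguments alpha {O Hm cmp id I} s a b c.
Arguments lam {O Hm cmp id I} s a.
Arguments rho {O Hm cmp id I} s a.
Arguments sigma {O Hm cmp id I} s a b.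

Definition CommComonoid {O : Type} {Hm : O -> O -> Type}
  {cmp : forall a b c : O, Hm b c -> Hm a b -> Hm a c}
  {id : forall a : O, Hm a a} {I : O} (S : SymMonoidal O Hm cmp id I)
  (X : O) (d : Hm X (tens S X X)) (u : Hm X I) : Prop :=
  cmp _ _ _ (alpha S X X X) (cmp _ _ _ (tmap S d (id X)) d)
    = cmp _ _ _ (tmap S (id X) d) d
  /\ cmp _ _ _ (lam S X) (cmp _ _ _ (tmap S u (id X)) d) = id X
  /\ cmp _ _ _ (rho S X) (cmp _ _ _ (tmap S (id X) u) d) = id X
  /\ cmp _ _ _ (sigma S X X) d = d.

Definition AlgSymMonoidal {C : Category} (P : FinProducts C) (M : Monad C) : Type :=
  SymMonoidal (Alg M) (AlgHom M) (@ahcomp C M) (ahid M) (FreeAlg M (terminal P)).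

(* The free functor A -> Alg(T) is strong (symmetric) monoidal, via natural
   algebra isomorphisms xi : T X ⊗ T Y ≅ T (X × Y); the unit comparison is the
   identity I = T(1). *)
Record FreeStrongMonoidal {C : Category} (P : FinProducts C) (M : Monad C)
  (S : AlgSymMonoidal P M) := {
  xi : forall X Y : C,
      AlgHom M (tens S (FreeAlg M X) (FreeAlg M Y)) (FreeAlg M (prod P X Y));
  xi_inv : forall X Y : C,
      AlgHom M (FreeAlg M (prod P X Y)) (tens S (FreeAlg M X) (FreeAlg M Y));
  xi_iso1 : forall X Y, ahcomp M (xi_inv X Y) (xi X Y) = ahid M _;
  xi_iso2 : forall X Y, ahcomp M (xi X Y) (xi_inv X Y) = ahid M _;
  xi_nat : forall X Y X' Y' (f : hom X X') (g : hom Y Y'),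
      ahcomp M (xi X' Y') (tmap S (Fmap M f) (Fmap M g))
      = ahcomp M (Fmap M (prod_map P f g)) (xi X Y);
  xi_assoc : forall X Y Z : C,
      ahcomp M (Fmap M (assocp P X Y Z))
        (ahcomp M (xi (prod P X Y) Z) (tmap S (xi X Y) (ahid M _)))
      = ahcomp M (xi X (prod P Y Z))
          (ahcomp M (tmap S (ahid M _) (xi Y Z)) (alpha S _ _ _));
  xi_lunit : forall Y : C,
      ahcomp M (Fmap M (pr2 P (terminal P) Y)) (xi (terminal P) Y)
      = lam S (FreeAlg M Y);
  xi_runit : forall X : C,
      ahcomp M (Fmap M (pr1 P X (terminal P))) (xi X (terminal P))
      = rho S (FreeAlg M X);
  xi_sym : forall X Y : C,
      ahcomp M (Fmap M (swap P X Y)) (xi X Y)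
      = ahcomp M (xi Y X) (sigma S _ _) }.

Arguments xi {C P M S} f0 X Y.
Arguments xi_inv {C P M S} f0 X Y.

Definition d_b {C : Category} {P : FinProducts C} {M : Monad C}
  {S : AlgSymMonoidal P M} (F : FreeStrongMonoidal P M S) (A : Alg M)
  (bh : AlgHom M A (FreeAlg M (acar A))) : AlgHom M A (tens S A A) :=
  ahcomp M (tmap S (str_hom M A) (str_hom M A))
    (ahcomp M (xi_inv F (acar A) (acar A))
       (ahcomp M (Fmap M (diag P (acar A))) bh)).

Definition u_b {C : Category} {P : FinProducts C} {M : Monad C}
  (A : Alg M) (bh : AlgHom M A (FreeAlg M (acar A)))
  : AlgHom M A (FreeAlg M (terminal P)) :=
  ahcomp M (Fmap M (bang P (acar A))) bh.

(* The proof transports the cartesian comonoid (Y, Δ, !) of the base category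
   along the free functor.  Since the free functor is strong monoidal via xi,
   the algebra maps D_Y = xi^{-1} ∘ T(Δ) and T(!) make the free algebra T Y a
   commutative comonoid (the coherence axioms of xi turn each comonoid law
   into the corresponding law for Δ and !).  For the algebra (X, a) we then
   have d_b = (a ⊗ a) ∘ D_X ∘ b, and the one genuinely new fact is an
   absorption law: the idempotent b ∘ a may be inserted on either tensor leg
   of D_X ∘ b without changing it.  This follows from the coalgebra law
   T(η) ∘ b = T(b) ∘ b together with a ∘ b = id; with it, each comonoid law
   for (X, d_b, u_b) reduces to the same law for (T X, D_X, T(!)). *)
From Stdlib Require Import ProofIrrelevance Setoid.

Arguments xi_iso1 {C P M S} f0 X Y.
Arguments xi_iso2 {C P M S} f0 X Y.
Arguments xi_nat {C P M S} f0 {X Y X' Y'} f g.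
Arguments xi_assoc {C P M S} f0 X Y Z.
Arguments xi_lunit {C P M S} f0 Y.
Arguments xi_runit {C P M S} f0 X.
Arguments xi_sym {C P M S} f0 X Y.
Arguments tmap_id {O Hm cmp id I} s a b.
Arguments tmap_comp {O Hm cmp id I} s {a b a' b' a'' b''} f g f' g'.
Arguments alpha_nat {O Hm cmp id I} s {a b c a' b' c'} f g h.
Arguments lam_nat {O Hm cmp id I} s {a a'} f.
Arguments rho_nat {O Hm cmp id I} s {a a'} f.
Arguments sigma_nat {O Hm cmp id I} s {a b a' b'} f g.

Section AlgebraCategory.
Context {C : Category} (M : Monad C).

Local Notation "g ⋅ f" := (ahcomp M g f) (at level 40, left associativity).

Lemma alg_hom_ext {A B : Alg M} (f g : AlgHom M A B) :
  proj1_sig f = proj1_sig g -> f = g.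
Proof.
  destruct f as [f Hf], g as [g Hg]; simpl; intros ->.
  f_equal; apply proof_irrelevance.
Qed.

Lemma alg_comp_assoc {A B D E : Alg M}
  (h : AlgHom M D E) (g : AlgHom M B D) (f : AlgHom M A B) :
  h ⋅ (g ⋅ f) = h ⋅ g ⋅ f.
Proof. apply alg_hom_ext; apply comp_assoc. Qed.

Lemma alg_comp_id_l {A B : Alg M} (f : AlgHom M A B) : ahid M B ⋅ f = f.
Proof. apply alg_hom_ext; apply comp_id_l. Qed.

Lemma alg_comp_id_r {A B : Alg M} (f : AlgHom M A B) : f ⋅ ahid M A = f.
Proof. apply alg_hom_ext; apply comp_id_r. Qed.

Lemma Fmap_comp {X Y Z : C} (g : hom Y Z) (f : hom X Y) :
  Fmap M (g ∘ f) = Fmap M g ⋅ Fmap M f.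
Proof. apply alg_hom_ext; apply Tmap_comp. Qed.

Lemma Fmap_id (X : C) : Fmap M (idm X) = ahid M (FreeAlg M X).
Proof. apply alg_hom_ext; apply Tmap_id. Qed.

Lemma free_str_unit (X : C) :
  str_hom M (FreeAlg M X) ⋅ Fmap M (eta M X) = ahid M (FreeAlg M X).
Proof. apply alg_hom_ext; apply mu_eta_r. Qed.
End AlgebraCategory.

Section CartesianComonoid.
Context {C : Category} (P : FinProducts C).

Lemma pair_comp {Z W X Y : C} (f : hom Z X) (g : hom Z Y) (h : hom W Z) :
  pair P f g ∘ h = pair P (f ∘ h) (g ∘ h).
Proof.
  rewrite <- (pair_uniq _ P _ _ _ (pair P f g ∘ h)).
  rewrite !comp_assoc, pr1_pair, pr2_pair. reflexivity.
Qed.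

Lemma prod_map_pair {Z X Y X' Y' : C} (f : hom X X') (g : hom Y Y')
  (h : hom Z X) (k : hom Z Y) :
  prod_map P f g ∘ pair P h k = pair P (f ∘ h) (g ∘ k).
Proof.
  unfold prod_map.
  rewrite pair_comp, <- !comp_assoc, pr1_pair, pr2_pair. reflexivity.
Qed.

Lemma prod_map_diag {X Y Z : C} (f : hom X Y) (g : hom X Z) :
  prod_map P f g ∘ diag P X = pair P f g.
Proof. unfold diag. rewrite prod_map_pair, !comp_id_r. reflexivity. Qed.

Lemma diag_coassoc (Y : C) :
  assocp P Y Y Y ∘ prod_map P (diag P Y) (idm Y) ∘ diag P Y
  = prod_map P (idm Y) (diag P Y) ∘ diag P Y.
Proof.
  rewrite <- comp_assoc, !prod_map_diag.
  unfold assocp, diag.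
  rewrite !pair_comp, <- !comp_assoc, !pr1_pair, !pr2_pair. reflexivity.
Qed.

Lemma diag_counit_l (Y : C) :
  pr2 P (terminal P) Y ∘ (prod_map P (bang P Y) (idm Y) ∘ diag P Y) = idm Y.
Proof. rewrite prod_map_diag, pr2_pair. reflexivity. Qed.

Lemma diag_counit_r (Y : C) :
  pr1 P Y (terminal P) ∘ (prod_map P (idm Y) (bang P Y) ∘ diag P Y) = idm Y.
Proof. rewrite prod_map_diag, pr1_pair. reflexivity. Qed.

Lemma diag_cocomm (Y : C) : swap P Y Y ∘ diag P Y = diag P Y.
Proof. unfold swap, diag. rewrite pair_comp, pr1_pair, pr2_pair. reflexivity. Qed.
End CartesianComonoid.

Section FreeComonoid.
Context {C : Category} (P : FinProducts C) (M : Monad C)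
  (S : AlgSymMonoidal P M) (F : FreeStrongMonoidal P M S).

Local Notation "g ⋅ f" := (ahcomp M g f) (at level 40, left associativity).

(* Functoriality of ⊗, restated with ahcomp so that it can be used for
   rewriting. *)
Lemma tmap_comp_alg {a b a' b' a'' b'' : Alg M}
  (g : AlgHom M a' a'') (f : AlgHom M a a')
  (g' : AlgHom M b' b'') (f' : AlgHom M b b') :
  tmap S (g ⋅ f) (g' ⋅ f') = tmap S g g' ⋅ tmap S f f'.
Proof. exact (tmap_comp S f g f' g'). Qed.

Lemma tmap_id_alg (a b : Alg M) : tmap S (ahid M a) (ahid M b) = ahid M _.
Proof. exact (tmap_id S a b). Qed.

Lemma xi_conj_tmap {X Y X' Y' : C} (f : hom X X') (g : hom Y Y') :
  xi F X' Y' ⋅ (tmap S (Fmap M f) (Fmap M g) ⋅ xi_inv F X Y)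
  = Fmap M (prod_map P f g).
Proof.
  rewrite alg_comp_assoc, xi_nat, <- alg_comp_assoc, xi_iso2, alg_comp_id_r.
  reflexivity.
Qed.

Lemma xi_inv_nat {X Y X' Y' : C} (f : hom X X') (g : hom Y Y') :
  tmap S (Fmap M f) (Fmap M g) ⋅ xi_inv F X Y
  = xi_inv F X' Y' ⋅ Fmap M (prod_map P f g).
Proof.
  rewrite <- (alg_comp_id_l M (tmap S _ _ ⋅ _)), <- (xi_iso1 F X' Y').
  rewrite <- alg_comp_assoc, xi_conj_tmap. reflexivity.
Qed.

Definition free_diag (Y : C)
  : AlgHom M (FreeAlg M Y) (tens S (FreeAlg M Y) (FreeAlg M Y)) :=
  xi_inv F Y Y ⋅ Fmap M (diag P Y).

Lemma tmap_free_diag {X Y Z : C} (f : hom X Y) (g : hom X Z) :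
  tmap S (Fmap M f) (Fmap M g) ⋅ free_diag X
  = xi_inv F Y Z ⋅ Fmap M (prod_map P f g ∘ diag P X).
Proof.
  unfold free_diag.
  rewrite alg_comp_assoc, xi_inv_nat, <- alg_comp_assoc, Fmap_comp. reflexivity.
Qed.

Lemma alpha_free (X Y Z : C) :
  alpha S (FreeAlg M X) (FreeAlg M Y) (FreeAlg M Z)
  = tmap S (ahid M _) (xi_inv F Y Z) ⋅ (xi_inv F X (prod P Y Z)
      ⋅ (Fmap M (assocp P X Y Z) ⋅ (xi F (prod P X Y) Z
      ⋅ tmap S (xi F X Y) (ahid M _)))).
Proof.
  rewrite (xi_assoc F), (alg_comp_assoc M (xi_inv F _ _)), xi_iso1, alg_comp_id_l.
  rewrite alg_comp_assoc, <- tmap_comp_alg, alg_comp_id_l, xi_iso1, tmap_id_alg.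
  symmetry; apply alg_comp_id_l.
Qed.

Lemma free_diag_twice_l (Y : C) :
  tmap S (free_diag Y) (ahid M _) ⋅ free_diag Y
  = tmap S (xi_inv F Y Y) (ahid M _) ⋅ (xi_inv F (prod P Y Y) Y
      ⋅ Fmap M (prod_map P (diag P Y) (idm Y) ∘ diag P Y)).
Proof.
  rewrite <- tmap_free_diag, Fmap_id, alg_comp_assoc, <- tmap_comp_alg.
  rewrite alg_comp_id_l. reflexivity.
Qed.

Lemma free_diag_twice_r (Y : C) :
  tmap S (ahid M _) (free_diag Y) ⋅ free_diag Y
  = tmap S (ahid M _) (xi_inv F Y Y) ⋅ (xi_inv F Y (prod P Y Y)
      ⋅ Fmap M (prod_map P (idm Y) (diag P Y) ∘ diag P Y)).
Proof.
  rewrite <- tmap_free_diag, Fmap_id, alg_comp_assoc, <- tmap_comp_alg.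
  rewrite alg_comp_id_l. reflexivity.
Qed.

(* Each law is the corresponding law of (Y, Δ, !) conjugated by xi, using
   the coherence of xi with α, λ, ρ and σ respectively. *)
Lemma free_comonoid (Y : C) :
  CommComonoid S (FreeAlg M Y) (free_diag Y) (Fmap M (bang P Y)).
Proof.
  unfold CommComonoid. repeat split.
  - rewrite free_diag_twice_l, free_diag_twice_r, alpha_free, <- !alg_comp_assoc.
    rewrite (alg_comp_assoc M (tmap S (xi F Y Y) _)), <- tmap_comp_alg.
    rewrite xi_iso2, alg_comp_id_l, tmap_id_alg, alg_comp_id_l.
    rewrite (alg_comp_assoc M (xi F _ _)), xi_iso2, alg_comp_id_l.
    rewrite <- Fmap_comp, comp_assoc, diag_coassoc.
    reflexivity.
  - rewrite <- (xi_lunit F), <- (Fmap_id M Y), <- !alg_comp_assoc.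
    unfold free_diag.
    rewrite (alg_comp_assoc M (tmap S _ _)), (alg_comp_assoc M (xi F _ _)).
    rewrite xi_conj_tmap, <- !Fmap_comp, diag_counit_l. reflexivity.
  - rewrite <- (xi_runit F), <- (Fmap_id M Y), <- !alg_comp_assoc.
    unfold free_diag.
    rewrite (alg_comp_assoc M (tmap S _ _)), (alg_comp_assoc M (xi F _ _)).
    rewrite xi_conj_tmap, <- !Fmap_comp, diag_counit_r. reflexivity.
  - rewrite <- (alg_comp_id_l M (sigma S _ _)), <- (xi_iso1 F Y Y).
    unfold free_diag.
    rewrite <- !alg_comp_assoc, (alg_comp_assoc M (xi F Y Y)), <- (xi_sym F).
    rewrite <- alg_comp_assoc, (alg_comp_assoc M (xi F Y Y)), xi_iso2.
    rewrite alg_comp_id_l, <- Fmap_comp, diag_cocomm. reflexivity.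
Qed.
End FreeComonoid.

Section BasisComonoid.
Context {C : Category} (P : FinProducts C) (M : Monad C)
  (S : AlgSymMonoidal P M) (F : FreeStrongMonoidal P M S)
  (A : Alg M) (b : hom (acar A) (T M (acar A)))
  (Hb_hom : b ∘ astr A = mu M (acar A) ∘ Tmap M b)
  (Hb_sec : astr A ∘ b = idm (acar A))
  (Hb_coalg : Tmap M (eta M (acar A)) ∘ b = Tmap M b ∘ b).

Local Notation "g ⋅ f" := (ahcomp M g f) (at level 40, left associativity).
Local Notation X := (acar A).
Local Notation a := (str_hom M A).
Local Notation bh := (basis_hom M A b Hb_hom).
Local Notation mh := (str_hom M (FreeAlg M X)).
Local Notation D := (free_diag P M S F X).

Lemma basis_coalg_absorb {Z : C} (g : hom (T M X) Z) :
  Tmap M (g ∘ b) ∘ b = Tmap M (g ∘ eta M X) ∘ b.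
Proof. rewrite !Tmap_comp, <- !comp_assoc, Hb_coalg. reflexivity. Qed.

(* Both b and η factor through ⟨id, η ∘ a⟩, since a ∘ b = id = a ∘ η. *)
Lemma basis_diag :
  Tmap M (prod_map P b (eta M X) ∘ diag P X) ∘ b
  = Tmap M (prod_map P (eta M X) (eta M X) ∘ diag P X) ∘ b.
Proof.
  assert (Hpair : forall f : hom X (T M X), astr A ∘ f = idm X ->
            pair P f (eta M X) = pair P (idm _) (eta M X ∘ astr A) ∘ f).
  { intros f Hf. rewrite pair_comp, <- comp_assoc, Hf, comp_id_r, comp_id_l.
    reflexivity. }
  rewrite !prod_map_diag, (Hpair b Hb_sec), (Hpair _ (astr_eta M A)).
  apply basis_coalg_absorb.
Qed.

Lemma basis_str : bh ⋅ a = mh ⋅ Fmap M b.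
Proof. apply alg_hom_ext; exact Hb_hom. Qed.

Lemma tmap_basis_diag (f g : hom X (T M X)) :
  tmap S (mh ⋅ Fmap M f) (mh ⋅ Fmap M g) ⋅ (D ⋅ bh)
  = tmap S mh mh ⋅ (xi_inv F _ _ ⋅ (Fmap M (prod_map P f g ∘ diag P X) ⋅ bh)).
Proof.
  rewrite tmap_comp_alg, <- alg_comp_assoc, (alg_comp_assoc M (tmap S (Fmap M _) _)).
  rewrite tmap_free_diag, <- alg_comp_assoc. reflexivity.
Qed.

Lemma absorb_left : tmap S (bh ⋅ a) (ahid M _) ⋅ (D ⋅ bh) = D ⋅ bh.
Proof.
  rewrite basis_str, <- (free_str_unit M X).
  transitivity (tmap S (mh ⋅ Fmap M (eta M X)) (mh ⋅ Fmap M (eta M X)) ⋅ (D ⋅ bh)).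
  - rewrite !tmap_basis_diag. do 2 f_equal.
    apply alg_hom_ext; exact basis_diag.
  - rewrite free_str_unit, tmap_id_alg. apply alg_comp_id_l.
Qed.

(* The right-hand version follows from the left one by cocommutativity of D_X. *)
Lemma absorb_right : tmap S (ahid M _) (bh ⋅ a) ⋅ (D ⋅ bh) = D ⋅ bh.
Proof.
  destruct (free_comonoid P M S F X) as (_ & _ & _ & Hcocomm).
  rewrite <- Hcocomm at 1.
  rewrite <- alg_comp_assoc, alg_comp_assoc, <- (sigma_nat S (bh ⋅ a) (ahid M _)).
  rewrite <- alg_comp_assoc, absorb_left, alg_comp_assoc, Hcocomm. reflexivity.
Qed.

Local Notation d := (tmap S a a ⋅ (D ⋅ bh)).

Lemma tmap_d_l {B : Alg M} (h : AlgHom M (FreeAlg M X) B) :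
  tmap S (h ⋅ bh) (ahid M A) ⋅ d = tmap S h a ⋅ (D ⋅ bh).
Proof.
  rewrite alg_comp_assoc, <- tmap_comp_alg, <- alg_comp_assoc, alg_comp_id_l.
  rewrite <- (alg_comp_id_r M a) at 2.
  rewrite tmap_comp_alg, <- alg_comp_assoc, absorb_left. reflexivity.
Qed.

Lemma tmap_d_r {B : Alg M} (h : AlgHom M (FreeAlg M X) B) :
  tmap S (ahid M A) (h ⋅ bh) ⋅ d = tmap S a h ⋅ (D ⋅ bh).
Proof.
  rewrite alg_comp_assoc, <- tmap_comp_alg, <- alg_comp_assoc, alg_comp_id_l.
  rewrite <- (alg_comp_id_r M a) at 1.
  rewrite tmap_comp_alg, <- alg_comp_assoc, absorb_right. reflexivity.
Qed.

Lemma d_b_factor : d_b F A bh = d.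
Proof. unfold d_b, free_diag. rewrite (alg_comp_assoc M (xi_inv F _ _)). reflexivity. Qed.

Lemma basis_coassoc :
  alpha S A A A ⋅ (tmap S d (ahid M A) ⋅ d) = tmap S (ahid M A) d ⋅ d.
Proof.
  destruct (free_comonoid P M S F X) as (Hcoassoc & _ & _ & _).
  rewrite (alg_comp_assoc M (tmap S a a) D bh) at 1 3.
  rewrite tmap_d_l, tmap_d_r.
  rewrite <- (alg_comp_id_r M a) at 3 4.
  rewrite !tmap_comp_alg, <- !alg_comp_assoc.
  rewrite (alg_comp_assoc M (alpha S _ _ _)), alpha_nat, <- alg_comp_assoc.
  f_equal. rewrite (alg_comp_assoc M (tmap S D _)), (alg_comp_assoc M (alpha S _ _ _)).
  rewrite Hcoassoc, <- alg_comp_assoc. reflexivity.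
Qed.

Lemma basis_counit_l :
  lam S A ⋅ (tmap S (Fmap M (bang P X) ⋅ bh) (ahid M A) ⋅ d) = ahid M A.
Proof.
  destruct (free_comonoid P M S F X) as (_ & Hlunit & _ & _).
  rewrite tmap_d_l, <- (alg_comp_id_l M (Fmap M _)), <- (alg_comp_id_r M a).
  rewrite tmap_comp_alg, <- alg_comp_assoc, alg_comp_assoc, lam_nat.
  rewrite <- alg_comp_assoc, (alg_comp_assoc M (tmap S _ _) D bh).
  rewrite (alg_comp_assoc M (lam S _)), Hlunit, alg_comp_id_l.
  apply alg_hom_ext; exact Hb_sec.
Qed.

Lemma basis_counit_r :
  rho S A ⋅ (tmap S (ahid M A) (Fmap M (bang P X) ⋅ bh) ⋅ d) = ahid M A.
Proof.
  destruct (free_comonoid P M S F X) as (_ & _ & Hrunit & _).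
  rewrite tmap_d_r, <- (alg_comp_id_l M (Fmap M _)), <- (alg_comp_id_r M a).
  rewrite tmap_comp_alg, <- alg_comp_assoc, alg_comp_assoc, rho_nat.
  rewrite <- alg_comp_assoc, (alg_comp_assoc M (tmap S _ _) D bh).
  rewrite (alg_comp_assoc M (rho S _)), Hrunit, alg_comp_id_l.
  apply alg_hom_ext; exact Hb_sec.
Qed.

Lemma basis_cocomm : sigma S A A ⋅ d = d.
Proof.
  destruct (free_comonoid P M S F X) as (_ & _ & _ & Hcocomm).
  rewrite alg_comp_assoc, sigma_nat, <- alg_comp_assoc.
  rewrite (alg_comp_assoc M (sigma S _ _)), Hcocomm. reflexivity.
Qed.
End BasisComonoid.

Theorem proposition6p1
  (C : Category) (P : FinProducts C) (M : Monad C)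
  (Str : CommStrength P M)
  (S : AlgSymMonoidal P M) (F : FreeStrongMonoidal P M S)
  (A : Alg M) (b : hom (acar A) (T M (acar A)))
  (Hb_hom : b ∘ astr A = mu M (acar A) ∘ Tmap M b)
  (Hb_sec : astr A ∘ b = idm (acar A))
  (Hb_coalg : Tmap M (eta M (acar A)) ∘ b = Tmap M b ∘ b) :
  CommComonoid S A (d_b F A (basis_hom M A b Hb_hom))
                   (u_b (P := P) A (basis_hom M A b Hb_hom)).
Proof.
  unfold CommComonoid, u_b. rewrite d_b_factor.
  repeat split.
  - exact (basis_coassoc P M S F A b Hb_hom Hb_sec Hb_coalg).
  - exact (basis_counit_l P M S F A b Hb_hom Hb_sec Hb_coalg).
  - exact (basis_counit_r P M S F A b Hb_hom Hb_sec Hb_coalg).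
  - exact (basis_cocomm P M S F A b Hb_hom).
Qed.
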